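(* Let $\epsilon>0$, let $s\ge 2$ be an integer, and let $0<p<\frac{s-1}{s}$. Then there exists $t=t(\epsilon,s,p)$ with the following property. For every $n$ and every $s$-wise $t$-intersecting family $\mathcal F\subseteq 2^{[n]}$, we have $\mu_p(\mathcal F)<\epsilon$.
   Context: Here $[n]=\{0,1,\dots,n-1\}$ and $2^{[n]}$ is the set of all subsets of $[n]$. A family $\mathcal F\subseteq 2^{[n]}$ is $s$-wise $t$-intersecting if $|F_1\cap\cdots\cap F_s|\ge t$ for every $F_1,\dots,F_s\in\mathcal F$. For $F\subseteq[n]$ define $\mu_p(F)=p^{|F|}(1-p)^{n-|F|}$, and for a family define $\mu_p(\mathcal F)=\sum_{F\in\mathcal F}\mu_p(F)$. Equivalently, $\mu_p(\mathcal F)$ is the probability that a random subset of $[n]$, containing each element independently with probability $p$, lies in $\mathcal F$. *)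

From mathcomp Require Import all_boot all_order all_algebra.
From mathcomp Require Import reals.
Set Implicit Arguments. Unset Strict Implicit. Unset Printing Implicit Defensive.
Import Order.TTheory GRing.Theory Num.Theory.
Local Open Scope ring_scope.

(* [n] = 'I_n ; subsets of [n] are {set 'I_n}; families are {set {set 'I_n}}. *)

(* F is s-wise t-intersecting: for every F_1,...,F_s in F (repetitions allowed),
   |F_1 ∩ ... ∩ F_s| >= t. *)
Definition swise_tintersecting (n s t : nat) (F : {set {set 'I_n}}) : Prop :=
  forall G : 'I_s -> {set 'I_n}, (forall i, G i \in F) ->
    (t <= #|\bigcap_(i < s) G i|)%N.

Definition mu_set (R : nzRingType) (n : nat) (p : R) (A : {set 'I_n}) : R :=
  p ^+ #|A| * (1 - p) ^+ (n - #|A|).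

Definition mu (R : nzRingType) (n : nat) (p : R) (F : {set {set 'I_n}}) : R :=
  \sum_(A in F) mu_set p A.

(* Shifting (replacing i by a larger j in the sets of F where the result is not
   already in F) preserves mu_p and the s-wise t-intersecting property, and
   terminates, so F may be assumed shifted.  Splitting a shifted F on its top
   coordinate x gives mu(F) = (1-p) mu(F_0) + p mu(F_1), where the link F_1 is
   s-wise (t-1)-intersecting and the part F_0 avoiding x is s-wise
   (t+s-1)-intersecting: in s sets avoiding x one may repeatedly trade a common
   element for x.  By induction mu(F) <= a^t whenever (1-p) a^s + p <= a, and
   Bernoulli's inequality shows that a = p + 1/s < 1 qualifies when
   p < (s-1)/s. *)

From mathcomp Require Import all_boot all_order all_algebra.
From mathcomp Require Import reals.
From mathcomp Require Import zify lra.
Set Implicit Arguments. Unset Strict Implicit. Unset Printing Implicit Defensive.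
Import Order.TTheory GRing.Theory Num.Theory.

Lemma notin_setD1 (T : finType) (x y : T) (A : {set T}) :
  y \notin A -> y \notin A :\ x.
Proof. by move=> yA; rewrite !inE negb_and yA orbT. Qed.

Lemma card_exchange (T : finType) (x y : T) (A : {set T}) :
  x \in A -> y \notin A -> #|y |: (A :\ x)| = #|A|.
Proof. by move=> xA yA; rewrite cardsU1 notin_setD1 // (cardsD1 x A) xA. Qed.

Section Shifting.
Variables (n s : nat).
Implicit Types (F : {set {set 'I_n}}) (A B : {set 'I_n}) (i j : 'I_n).

Definition shifted k F := forall A, A \in F -> forall i j,
  (i < j)%N -> (j < k)%N -> i \in A -> j \notin A -> j |: (A :\ i) \in F.

Definition shift_moves i j F A := [&& i \in A, j \notin A & j |: (A :\ i) \notin F].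
Definition shift_set i j F A := if shift_moves i j F A then j |: (A :\ i) else A.
Definition shift i j F := [set shift_set i j F A | A in F].

Lemma in_shift_set i j F A y :
  y != i -> y != j -> (y \in shift_set i j F A) = (y \in A).
Proof.
move=> yi yj; rewrite /shift_set; case: ifP => // _.
by rewrite !inE (negbTE yi) (negbTE yj).
Qed.

Lemma card_shift_set i j F A : #|shift_set i j F A| = #|A|.
Proof.
by rewrite /shift_set; case: ifP => // /and3P[iA jA _]; rewrite card_exchange.
Qed.

Lemma shift_set_inj i j F : {in F &, injective (shift_set i j F)}.
Proof.
move=> A B AF BF; rewrite /shift_set.
case: ifP => mA; case: ifP => mB //.
- case/and3P: mA => iA jA _; case/and3P: mB => iB jB _.
  move=> /(congr1 (fun C => i |: (C :\ j))).
  by rewrite !setU1K ?notin_setD1 // !setD1K.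
- by move=> eAB; move: mA; rewrite /shift_moves eAB BF !andbF.
- by move=> eAB; move: mB; rewrite /shift_moves -eAB AF !andbF.
Qed.

Lemma mu_shift (R : nzRingType) (p : R) i j F : mu p (shift i j F) = mu p F.
Proof.
rewrite /mu big_imset; last exact: shift_set_inj.
by apply: eq_bigr => A _; rewrite /mu_set card_shift_set.
Qed.

Lemma in_bigcap_shift_set i j F (A : 'I_s -> {set 'I_n}) y : y != i -> y != j ->
  (y \in \bigcap_(l < s) shift_set i j F (A l)) = (y \in \bigcap_(l < s) A l).
Proof.
by move=> yi yj; apply/bigcapP/bigcapP => yA l _; move: (yA l isT); rewrite in_shift_set.
Qed.

Lemma shift_swise i j t F :
  swise_tintersecting s t F -> swise_tintersecting s t (shift i j F).
Proof.
move=> Ft G' G'F.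
have [A AF G'A] := fin_all_exists2 (U := fun=> {set 'I_n}) (fun l => imsetP (G'F l)).
have -> : \bigcap_(l < s) G' l = \bigcap_(l < s) shift_set i j F (A l).
  by apply: eq_bigr => l _; rewrite G'A.
set I := \bigcap_(l < s) A l; set I' := \bigcap_(l < s) shift_set i j F (A l).
have AI := Ft A AF.
have [l1 ml1|nomove] := pickP (fun l => shift_moves i j F (A l)); last first.
  suff -> : I' = I by [].
  by apply: eq_bigr => l _; rewrite /shift_set nomove.
have /and3P[iA1 jA1 _] := ml1.
have jI : j \notin I by apply: contra jA1 => /bigcapP; apply.
have [iI|iI] := boolP (i \in I); last first.
  apply: (leq_trans AI); apply: subset_leq_card; apply/subsetP => y yI.
  have yi : y != i by apply: contraNneq iI => <-.
  have yj : y != j by apply: contraNneq jI => <-.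
  by rewrite in_bigcap_shift_set.
have [jI'|jI'] := boolP (j \in I').
  apply: (leq_trans AI); rewrite -(card_exchange iI jI); apply: subset_leq_card.
  apply/subsetP => y; rewrite !inE => /orP[/eqP -> //|/andP[yi yI]].
  have yj : y != j by apply: contraNneq jI => <-.
  by rewrite in_bigcap_shift_set.
(* Some [A l0] stayed put although it can be shifted, so its shift is already
   in [F]; substituting it for [A l0] gives an [s]-tuple in [F] whose
   intersection lies in [I']. *)
have [l0 jA0'] : exists l0, j \notin shift_set i j F (A l0).
  by apply/existsP; rewrite -negb_forall; apply: contra jI' => /forallP jA; apply/bigcapP.
have nml0 : ~~ shift_moves i j F (A l0).
  by apply: contra jA0' => ml0; rewrite /shift_set ml0 setU11.
have jA0 : j \notin A l0 by move: jA0'; rewrite /shift_set (negbTE nml0).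
have iA0 : i \in A l0 by move/bigcapP: iI; apply.
pose B l := if l == l0 then j |: (A l0 :\ i) else A l.
have BF l : B l \in F.
  by rewrite /B; case: eqP => // _; move: nml0; rewrite /shift_moves iA0 jA0 negbK.
have l10 : l1 != l0 by apply: contraNneq nml0 => <-.
apply: (leq_trans (Ft B BF)); apply: subset_leq_card; apply/subsetP => y /bigcapP yB.
have yj : y != j.
  by apply: contraNneq jA1 => <-; move: (yB l1 isT); rewrite /B (negbTE l10).
have := yB l0 isT; rewrite /B eqxx !inE (negbTE yj) /= => /andP[yi yA0].
rewrite in_bigcap_shift_set //; apply/bigcapP => l _; have := yB l isT; rewrite /B.
by case: eqP => [->|].
Qed.

Definition weight A := (\sum_(a in A) val a)%N.
Definition family_weight F := (\sum_(A in F) weight A)%N.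

Lemma weight_shift_set i j F A : (i < j)%N ->
  (weight A + shift_moves i j F A <= weight (shift_set i j F A))%N.
Proof.
move=> ij; rewrite /shift_set; case: ifP => mA; last by rewrite addn0.
case/and3P: mA => iA jA _.
rewrite /weight big_setU1 ?notin_setD1 //= (big_setD1 i iA) /=.
by rewrite addnAC addn1 leq_add2r.
Qed.

Lemma family_weight_shift i j F A : (i < j)%N -> A \in F -> shift_moves i j F A ->
  (family_weight F < family_weight (shift i j F))%N.
Proof.
move=> ij AF mA; rewrite /family_weight big_imset /=; last exact: shift_set_inj.
apply: (@leq_trans (\sum_(B in F) (weight B + shift_moves i j F B))).
  by rewrite big_split /= -addn1 leq_add2l (bigD1 A AF) /= mA leq_addr.
by apply: leq_sum => B _; exact: weight_shift_set.
Qed.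

Lemma shifted_compression (R : nzRingType) (p : R) t F :
  swise_tintersecting s t F ->
  exists G, [/\ shifted n G, swise_tintersecting s t G & mu p G = mu p F].
Proof.
pose W := (\sum_(A : {set 'I_n}) weight A)%N.
have family_weight_le G : (family_weight G <= W)%N.
  by rewrite /family_weight big_mkcond leq_sum // => A _; case: ifP.
move: {2}(W - family_weight F).+1 (ltnSn (W - family_weight F)) => m.
elim: m F => [//|m IH] F Fm Ft.
have [[[A i] j] /and3P[/= AF ij mA] | unmoved] :=
  pickP (fun x : {set 'I_n} * 'I_n * 'I_n =>
           [&& x.1.1 \in F, (x.1.2 < x.2)%N & shift_moves x.1.2 x.2 F x.1.1]).
- have [|G [Gs Gt GF]] := IH (shift i j F) _ (shift_swise (i:=i) (j:=j) Ft).
    have := family_weight_shift ij AF mA; have := family_weight_le (shift i j F).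
    lia.
  by exists G; rewrite GF mu_shift.
- exists F; split=> // A AF i j ij _ iA jA; apply: contraT => jAiF.
  by have := unmoved (A, i, j); rewrite /= AF ij /shift_moves iA jA jAiF.
Qed.

End Shifting.

Section TopCoordinate.
Variables (n s : nat).
Implicit Types (F : {set {set 'I_n}}) (A B : {set 'I_n}) (x y : 'I_n).

Definition bounded k F := forall A, A \in F -> forall y, y \in A -> (y < k)%N.
Definition avoiding x F := [set A in F | x \notin A].
Definition link x F := [set B | (x |: B \in F) && (x \notin B)].

Lemma card_bounded k A : (forall y, y \in A -> (y < k)%N) -> (#|A| <= k)%N.
Proof.
move=> Ak; rewrite cardE -(size_map val) -[k](size_iota 0).
apply: uniq_leq_size; first by rewrite (map_inj_uniq val_inj) enum_uniq.
by move=> _ /mapP[y yA ->]; rewrite mem_enum in yA; rewrite mem_iota add0n Ak.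
Qed.

Lemma ltn_neq_top x y : (y < x.+1)%N -> y != x -> (y < x)%N.
Proof. by rewrite ltnS ltn_neqAle val_eqE => -> ->. Qed.

Lemma bounded_avoiding x F : bounded x.+1 F -> bounded x (avoiding x F).
Proof.
move=> Fx A; rewrite inE => /andP[AF xA] y yA.
by apply: ltn_neq_top (Fx A AF y yA) _; apply: contraNneq xA => <-.
Qed.

Lemma bounded_link x F : bounded x.+1 F -> bounded x (link x F).
Proof.
move=> Fx B; rewrite inE => /andP[BF xB] y yB.
apply: ltn_neq_top (Fx _ BF y _) _; first by rewrite inE yB orbT.
by apply: contraNneq xB => <-.
Qed.

Lemma shifted_avoiding x F : shifted x.+1 F -> shifted x (avoiding x F).
Proof.
move=> Fs A; rewrite inE => /andP[AF xA] i j ij jx iA jA.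
have xj : x != j by apply: contraTneq jx => <-; rewrite ltnn.
by rewrite /avoiding !inE negb_or xj negb_and xA orbT andbT Fs // ltnW.
Qed.

Lemma shifted_link x F : shifted x.+1 F -> shifted x (link x F).
Proof.
move=> Fs B; rewrite /link inE => /andP[BF xB] i j ij jx iB jB.
have xj : x != j by apply: contraTneq jx => <-; rewrite ltnn.
have ix : i != x by apply: contraTneq (ltn_trans ij jx) => ->; rewrite ltnn.
have ij' : i != j by rewrite neq_ltn ij.
have := Fs _ BF i j ij (ltnW jx).
rewrite !inE iB orbT negb_or (eq_sym j) xj jB => /(_ isT isT).
have -> : j |: ((x |: B) :\ i) = x |: (j |: B :\ i).
  apply/setP => y; rewrite !inE.
  by case: (eqVneq y i) => [->|_] /=; rewrite ?(negbTE ix) ?(negbTE ij') // orbCA.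
by move=> ->; rewrite (negbTE xj) (negbTE xB) andbF.
Qed.

Lemma link_swise x t F :
  swise_tintersecting s t.+1 F -> swise_tintersecting s t (link x F).
Proof.
move=> Ft G GF.
have xGF l : x |: G l \in F by move: (GF l); rewrite inE => /andP[].
have sub : \bigcap_(l < s) (x |: G l) \subset x |: \bigcap_(l < s) G l.
  apply/subsetP => y /bigcapP yG; rewrite !inE; case: (eqVneq y x) => //= yx.
  by apply/bigcapP => l _; move: (yG l isT); rewrite !inE (negbTE yx).
have := leq_trans (Ft _ xGF) (subset_leq_card sub).
by rewrite cardsU1; case: (_ \notin _); rewrite ?add1n ?add0n //; apply: ltnW.
Qed.

Lemma card_bigcap_shifted x t F : bounded x.+1 F -> shifted x.+1 F ->
  swise_tintersecting s t.+1 F ->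
  forall c (G : 'I_s -> {set 'I_n}), (forall l, G l \in F) ->
  #|[set l | x \notin G l]| = c.+1 -> (t.+1 + c <= #|\bigcap_(l < s) G l|)%N.
Proof.
move=> Fx Fs Ft c; elim: c => [|c IH] G GF Gx; first by rewrite addn0; exact: Ft.
have /set0Pn [l0 xGl0] : [set l | x \notin G l] != set0 by rewrite -card_gt0 Gx.
have /set0Pn [j jG] : \bigcap_(l < s) G l != set0.
  by rewrite -card_gt0; apply: leq_trans (Ft G GF).
have jGl l : j \in G l by move/bigcapP: jG; apply.
rewrite inE in xGl0.
have jx : (j < x)%N.
  by apply: ltn_neq_top (Fx _ (GF l0) _ (jGl l0)) _; apply: contraNneq xGl0 => <-.
(* Exchanging a common element [j] for the missing top element [x] in one set
   keeps the tuple in [F] and shrinks the intersection by [j]. *)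
pose G' l := if l == l0 then x |: (G l0 :\ j) else G l.
have G'F l : G' l \in F by rewrite /G'; case: eqP => // _; apply: Fs.
have G'x : [set l | x \notin G' l] = [set l | x \notin G l] :\ l0.
  by apply/setP => l; rewrite !inE /G'; case: eqVneq => [->|] //=; rewrite setU11.
have cardG'x : #|[set l | x \notin G' l]| = c.+1.
  by move: Gx; rewrite G'x (cardsD1 l0) !inE xGl0 add1n => -[].
have /set0Pn [l1] : [set l | x \notin G' l] != set0 by rewrite -card_gt0 cardG'x.
rewrite G'x !inE => /andP[l1l0 xGl1].
have sub : \bigcap_(l < s) G' l \subset (\bigcap_(l < s) G l) :\ j.
  apply/subsetP => y /bigcapP yG'.
  have := yG' l0 isT; rewrite /G' eqxx !inE => /orP[/eqP yx|/andP[yj yGl0]].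
    by move: (yG' l1 isT); rewrite /G' (negbTE l1l0) yx (negbTE xGl1).
  rewrite yj; apply/bigcapP => l _; have := yG' l isT; rewrite /G'.
  by case: eqP => [->|].
rewrite (cardsD1 j) jG add1n addnS ltnS.
exact: leq_trans (IH G' G'F cardG'x) (subset_leq_card sub).
Qed.

Lemma avoiding_swise x t F : (0 < s)%N -> bounded x.+1 F -> shifted x.+1 F ->
  swise_tintersecting s t.+1 F -> swise_tintersecting s (t + s) (avoiding x F).
Proof.
move=> s0 Fx Fs Ft G GF.
have xG l : x \notin G l by move: (GF l); rewrite inE => /andP[].
have GF' l : G l \in F by move: (GF l); rewrite inE => /andP[].
rewrite -[s in (t + s)%N](prednK s0) addnS -addSn.
apply: (card_bigcap_shifted Fx Fs Ft GF').
by rewrite prednK // -[RHS]card_ord; apply: eq_card => l; rewrite inE xG.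
Qed.

End TopCoordinate.

(* mu_p of [A] as a subset of [[k]], meaningful when [A] is bounded by [k];
   [mu_set p A] is [mu_within n p A]. *)
Definition mu_within (R : nzRingType) (n k : nat) (p : R) (A : {set 'I_n}) : R :=
  p ^+ #|A| * (1 - p) ^+ (k - #|A|).

Local Open Scope ring_scope.

Lemma mu_within_split (R : comNzRingType) (p : R) n (x : 'I_n) (F : {set {set 'I_n}}) :
  bounded x.+1 F ->
  \sum_(A in F) mu_within x.+1 p A =
    (1 - p) * \sum_(A in avoiding x F) mu_within x p A
    + p * \sum_(B in link x F) mu_within x p B.
Proof.
move=> Fx; rewrite (bigID (fun A : {set 'I_n} => x \in A)) /= addrC; congr (_ + _).
  rewrite big_distrr /=; apply: eq_big => [A|A]; first by rewrite !inE.
  move=> /andP[AF xA].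
  have AxF : A \in avoiding x F by rewrite inE AF xA.
  have Ax := card_bounded (bounded_avoiding Fx AxF).
  by rewrite /mu_within subSn // exprS mulrCA.
have -> : \sum_(A in F | x \in A) mu_within x.+1 p A =
          \sum_(A in [set x |: B | B in link x F]) mu_within x.+1 p A.
  apply: eq_bigl => A; apply/andP/imsetP => [[AF xA]|[B BF ->]].
    by exists (A :\ x); rewrite ?setD1K // inE setD1K // AF !inE eqxx.
  by move: BF; rewrite inE => /andP[-> _]; rewrite setU11.
rewrite big_imset /=; last first.
  move=> B C; rewrite !inE => /andP[_ xB] /andP[_ xC] BC.
  by rewrite -(setU1K xB) -(setU1K xC) BC.
rewrite big_distrr /=; apply: eq_bigr => B; rewrite inE => /andP[_ xB].
by rewrite /mu_within cardsU1 xB add1n subSS exprS mulrA.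
Qed.

Section MeasureBound.
Variables (R : realDomainType) (p a : R) (s : nat).
Hypotheses (p0 : 0 <= p) (p1 : p <= 1) (a0 : 0 <= a) (s0 : (0 < s)%N)
  (pa : (1 - p) * a ^+ s + p <= a).

Lemma mu_within_le_expr n k t (F : {set {set 'I_n}}) :
  (k <= n)%N -> bounded k F -> shifted k F -> swise_tintersecting s t F ->
  \sum_(A in F) mu_within k p A <= a ^+ t.
Proof.
elim: k t F => [|k IH] t F kn Fk Fs Ft.
  have F0 A : A \in F -> A = set0.
    move=> AF; apply/setP => y; rewrite inE.
    by have := Fk A AF y; case: (y \in A) => // /(_ isT).
  have [->|[A AF]] := set_0Vmem F; first by rewrite big_set0 exprn_ge0.
  have t0 : t = 0%N.
    apply/eqP; rewrite -leqn0; apply: leq_trans (Ft (fun=> A) (fun=> AF)) _.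
    by rewrite -(prednK s0) big_ord_recl (F0 A AF) set0I cards0.
  have -> : F = [set A].
    apply/setP => B; rewrite inE.
    by apply/idP/eqP => [BF|->//]; rewrite (F0 B BF) (F0 A AF).
  by rewrite t0 big_set1 (F0 A AF) /mu_within cards0 !expr0 mulr1.
pose x := Ordinal kn.
have Fx : bounded x.+1 F := Fk.
have Fxs : shifted x.+1 F := Fs.
rewrite (mu_within_split p Fx).
have IHa t' :=
  IH t' (avoiding x F) (ltnW kn) (bounded_avoiding Fx) (shifted_avoiding Fxs).
have IHl t' := IH t' (link x F) (ltnW kn) (bounded_link Fx) (shifted_link Fxs).
have q0 : 0 <= 1 - p by rewrite subr_ge0.
case: t Ft => [|t] Ft.
  have := ler_wpM2l q0 (IHa 0%N (fun _ _ => leq0n _)).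
  have := ler_wpM2l p0 (IHl 0%N (fun _ _ => leq0n _)).
  rewrite expr0; lra.
have := ler_wpM2l q0 (IHa _ (avoiding_swise s0 Fx Fxs Ft)).
have := ler_wpM2l p0 (IHl _ (link_swise (x := x) Ft)).
have := ler_wpM2l (exprn_ge0 t a0) pa.
rewrite exprS exprD; nra.
Qed.

Lemma mu_le_expr n t (F : {set {set 'I_n}}) :
  swise_tintersecting s t F -> mu p F <= a ^+ t.
Proof.
move=> Ft; have [G [Gs Gt <-]] := shifted_compression p Ft.
exact: mu_within_le_expr (leqnn n) (fun _ _ y _ => ltn_ord y) Gs Gt.
Qed.

End MeasureBound.

Lemma expr_Bernoulli_le1 (R : realDomainType) (a : R) m :
  0 <= a -> a <= 1 -> a ^+ m * (1 + m%:R * (1 - a)) <= 1.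
Proof.
move=> a0 a1; elim: m => [|m IH]; first by rewrite mul0r addr0 mulr1.
have step : a * (1 + m.+1%:R * (1 - a)) <= 1 + m%:R * (1 - a).
  have : 0 <= (m%:R + 1) * ((1 - a) * (1 - a)) by rewrite mulr_ge0 ?addr_ge0 ?sqr_ge0.
  rewrite -natr1; nra.
apply: le_trans IH; rewrite exprSr -mulrA.
by apply: ler_wpM2l; first exact: exprn_ge0.
Qed.

Lemma exists_expr_lt (R : archiFieldType) (a eps : R) :
  0 <= a -> a < 1 -> 0 < eps -> exists t, a ^+ t < eps.
Proof.
move=> a0 a1 eps0; set t := Num.bound (eps * (1 - a))^-1.
have d0 : 0 < 1 - a by rewrite subr_gt0.
have t_large : (eps * (1 - a))^-1 < t%:R.
  by apply: archi_boundP; rewrite invr_ge0 ltW ?mulr_gt0.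
rewrite -(ltr_pM2l (mulr_gt0 eps0 d0)) mulfV ?gt_eqF ?mulr_gt0 // in t_large.
have td0 : 0 < 1 + t%:R * (1 - a) by rewrite ltr_pwDl ?mulr_ge0 ?ltW.
exists t; rewrite -(ltr_pM2r td0).
apply: le_lt_trans (expr_Bernoulli_le1 t a0 (ltW a1)) _; lra.
Qed.

Lemma recursion_le_p_add_inv (R : realFieldType) (p : R) s : (0 < s)%N ->
  0 <= p -> p + s%:R^-1 <= 1 -> (1 - p) * (p + s%:R^-1) ^+ s + p <= p + s%:R^-1.
Proof.
move=> s0 p0 a1; have sr0 : 0 < s%:R :> R by rewrite ltr0n.
have a0 : 0 <= p + s%:R^-1 by rewrite addr_ge0 // invr_ge0 ltW.
have e : 1 + s%:R * (1 - (p + s%:R^-1)) = s%:R * (1 - p).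
  by rewrite !mulrBr mulrDr mulfV ?gt_eqF //; lra.
have := expr_Bernoulli_le1 s a0 a1; rewrite e mulrCA -ler_pdivlMl // mulr1.
lra.
Qed.

Theorem lemma2p3 (R : realType) (eps : R) (s : nat) (p : R) :
  0 < eps -> (2 <= s)%N -> 0 < p -> p < (s.-1)%:R / s%:R ->
  exists t : nat, forall (n : nat) (F : {set {set 'I_n}}),
    swise_tintersecting s t F -> mu p F < eps.
Proof.
move=> eps0 s2 p0 ps.
have s0 : (0 < s)%N by apply: leq_trans s2.
have a1 : p + s%:R^-1 < 1.
  move: ps; rewrite -subn1 natrB // mulrBl divff ?mul1r ?pnatr_eq0 -?lt0n //; lra.
have a0 : 0 <= p + s%:R^-1 by rewrite addr_ge0 ?invr_ge0 ?ler0n ?ltW.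
have [t at_eps] := exists_expr_lt a0 a1 eps0.
exists t => n F Ft; apply: le_lt_trans at_eps.
have p1 : p <= 1 by apply: le_trans (ltW a1); rewrite lerDl invr_ge0.
have pa := recursion_le_p_add_inv s0 (ltW p0) (ltW a1).
exact: (mu_le_expr (ltW p0) p1 a0 s0 pa Ft).
Qed.
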